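(* Let $L$ be a Lie algebra over a field $F$ and $\tilde L=L\otimes_FE$. Let $\Omega\subset\tilde L$ be a finite family of elements such that the family $\operatorname{ad}(\Omega)=\{\operatorname{ad}(b)\}_{b\in\Omega}$ satisfies (U1) and (U2), and suppose $U_2(\operatorname{ad}(\Omega))=0$. Then $a=\sum_{b\in\Omega}b$ is a sandwich of the Lie algebra $\tilde L$.
   Context: $E$ is the commutative associative $F$-algebra without unit generated by $e_1,e_2,\dots$ with relations $e_i^2=0$; its basis consists of $e_\pi=e_{i_1}\cdots e_{i_r}$ for nonempty finite $\pi=\{i_1<\dots<i_r\}$. $\tilde L=L\otimes_FE$ with $[x\otimes\alpha,y\otimes\beta]=[x,y]\otimes\alpha\beta$. For $D=\operatorname{Der}(L)$, $\tilde D=D\otimes_FE$ acts by derivations on $\tilde L$, and $\tilde D_i=\sum_{\pi\ni i}D\otimes e_\pi$. For $b\in\tilde L$, $\operatorname{ad}(b):x\mapsto[x,b]$ is viewed as an element of $\tilde D$. A finite family $\Omega$ of elements of $\tilde D$ satisfies (U1) if each element lies in some $\tilde D_i$, and (U2) if any two of its elements commute. For such $\Omega$, $U_k(\Omega)=\sum d_1\cdots d_k$, summed over all $k$-element subsets $\{d_1,\dots,d_k\}$ of $\Omega$; $U_0(\Omega)=\mathrm{Id}$. An element $a$ of a Lie algebra $M$ is a sandwich if $\operatorname{ad}(a)^2=0$ and $\operatorname{ad}(a)\operatorname{ad}(c)\operatorname{ad}(a)=0$ for all $c\in M$. *)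

From HB Require Import structures.
From mathcomp Require Import all_boot all_order all_algebra.
From mathcomp Require Import finmap.
Set Implicit Arguments. Unset Strict Implicit. Unset Printing Implicit Defensive.
Import Order.TTheory GRing.Theory Num.Theory.
Local Open Scope ring_scope.


Definition lie_bracket (F : fieldType) (L : lmodType F) (br : L -> L -> L) : Prop :=
  [/\ (forall (c : F) (x y z : L), br (c *: x + y) z = c *: br x z + br y z),
      (forall (c : F) (x y z : L), br x (c *: y + z) = c *: br x y + br x z),
      (forall x : L, br x x = 0) &
      (forall x y z : L, br x (br y z) + br y (br z x) + br z (br x y) = 0)].

(* L~ = L (x)_F E.  E has basis e_pi, pi a nonempty finite subset of nat,
   with e_pi e_sigma = e_(pi u sigma) if pi, sigma disjoint and 0 otherwise.
   An element  sum_pi x_pi (x) e_pi  is represented by its coefficient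
   function pi |-> x_pi; genuine elements of L~ are those with x_emptyset = 0
   and finite support (predicate [in_Lt]). *)
Definition Lt (F : fieldType) (L : lmodType F) := {fset nat} -> L.

Definition in_Lt (F : fieldType) (L : lmodType F) (x : Lt L) : Prop :=
  x fset0 = 0 /\
  exists S : {fset {fset nat}}, forall pi : {fset nat}, pi \notin S -> x pi = 0.

(* sum over all decompositions rho = pi (disjoint union) sigma with
   pi, sigma nonempty: this is the coefficient of e_rho in a product. *)
Definition part_sum (F : fieldType) (L : lmodType F) (rho : {fset nat})
  (f : {fset nat} -> {fset nat} -> L) : L :=
  \sum_(pi <- fpowerset rho | (pi != fset0) && ((rho `\` pi)%fset != fset0))
     f pi (rho `\` pi)%fset.

(* Bracket of L~ : [x (x) a, y (x) b] = [x,y] (x) ab. *)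
Definition brt (F : fieldType) (L : lmodType F) (br : L -> L -> L)
  (x y : Lt L) : Lt L :=
  fun rho => part_sum rho (fun pi sigma => br (x pi) (y sigma)).

Definition adt (F : fieldType) (L : lmodType F) (br : L -> L -> L)
  (b : Lt L) : Lt L -> Lt L := fun x => brt br x b.

(* Elements of D~ = Der(L) (x) E (more generally End(L) (x) E), given by
   coefficient functions pi |-> d_pi, acting on L~ by
   (d (x) a)(x (x) b) = d(x) (x) ab. *)
Definition Dt (F : fieldType) (L : lmodType F) := {fset nat} -> L -> L.

Definition actD (F : fieldType) (L : lmodType F) (d : Dt L) (x : Lt L) : Lt L :=
  fun rho => part_sum rho (fun pi sigma => d pi (x sigma)).

(* ad(b) viewed as an element of D~: if b = sum_pi b_pi (x) e_pi then
   ad(b) = sum_pi ad(b_pi) (x) e_pi. *)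
Definition adD (F : fieldType) (L : lmodType F) (br : L -> L -> L)
  (b : Lt L) : Dt L := fun pi y => br y (b pi).

Definition in_Dti (F : fieldType) (L : lmodType F) (i : nat) (d : Dt L) : Prop :=
  forall pi : {fset nat}, i \notin pi -> forall y : L, d pi y = 0.

Definition U1 (F : fieldType) (L : lmodType F) (Om : seq (Dt L)) : Prop :=
  forall k, (k < size Om)%N -> exists i : nat, in_Dti i (nth (fun _ _ => 0) Om k).

Definition U2 (F : fieldType) (L : lmodType F) (Om : seq (Dt L)) : Prop :=
  forall k l, (k < size Om)%N -> (l < size Om)%N ->
  forall x : Lt L, in_Lt x ->
    actD (nth (fun _ _ => 0) Om k) (actD (nth (fun _ _ => 0) Om l) x)
    = actD (nth (fun _ _ => 0) Om l) (actD (nth (fun _ _ => 0) Om k) x).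

Definition U2op (F : fieldType) (L : lmodType F) (Om : seq (Dt L)) (x : Lt L)
  : Lt L :=
  fun rho => \sum_(k < size Om) \sum_(l < size Om | (k < l)%N)
     actD (nth (fun _ _ => 0) Om k) (actD (nth (fun _ _ => 0) Om l) x) rho.

Definition sumLt (F : fieldType) (L : lmodType F) (Om : seq (Lt L)) : Lt L :=
  fun pi => \sum_(b <- Om) b pi.

Definition sandwich (F : fieldType) (L : lmodType F) (br : L -> L -> L)
  (a : Lt L) : Prop :=
  (forall x : Lt L, in_Lt x -> adt br a (adt br a x) = (fun _ => 0)) /\
  (forall c : Lt L, in_Lt c -> forall x : Lt L, in_Lt x ->
     adt br a (adt br c (adt br a x)) = (fun _ => 0)).

From HB Require Import structures.
From mathcomp Require Import all_boot all_order all_algebra.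
From mathcomp Require Import finmap.
From Stdlib Require Import FunctionalExtensionality.
Set Implicit Arguments. Unset Strict Implicit. Unset Printing Implicit Defensive.
Import GRing.Theory.
Local Open Scope ring_scope.

(* Write ad(a) = D_1 + ... + D_n with D_k = ad(b_k). Each D_k lies in some D~_i, and since
   e_i^2 = 0 every product applying D_k twice vanishes: D_k^2 = 0 and [D_k x, D_k y] = 0.
   Hence ad(a)^2 = sum_(k<l) (D_k D_l + D_l D_k), which is 2 U_2 = 0 by (U2).
   For the second identity, the Leibniz rule and ad(a)^2 = 0 give [[[x,a],c],a] = [[x,a],[c,a]]
   = sum_(k<l) ([D_k x, D_l c] + [D_l x, D_k c]); expanding 0 = U_2 [x,c] by the second-order
   Leibniz rule identifies this sum with -[U_2 x, c] - [x, U_2 c] = 0.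
   The Jacobi identity in L~ reduces, through the associativity of ordered decompositions of
   the index set, to the Jacobi identity in L. *)

Section LieBracket.
Variables (F : fieldType) (L : lmodType F) (br : L -> L -> L).
Hypothesis HL : lie_bracket br.

Lemma lie_brDl x y z : br (x + y) z = br x z + br y z.
Proof. by move: HL; rewrite /lie_bracket => -[linl _ _ _]; rewrite -[x]scale1r linl !scale1r. Qed.

Lemma lie_brDr x y z : br x (y + z) = br x y + br x z.
Proof. by move: HL; rewrite /lie_bracket => -[_ linr _ _]; rewrite -[y]scale1r linr !scale1r. Qed.

Lemma lie_br0l z : br 0 z = 0.
Proof. by apply: (addrI (br 0 z)); rewrite addr0 -lie_brDl addr0. Qed.

Lemma lie_br0r z : br z 0 = 0.
Proof. by apply: (addrI (br z 0)); rewrite addr0 -lie_brDr addr0. Qed.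

Lemma lie_brNr x y : br x (- y) = - br x y.
Proof. by apply/eqP; rewrite -addr_eq0 -lie_brDr addNr lie_br0r. Qed.

Lemma lie_brC x y : br x y = - br y x.
Proof.
move: HL; rewrite /lie_bracket => -[_ _ alt _]; apply/eqP; rewrite -addr_eq0.
by have := alt (x + y); rewrite lie_brDl !lie_brDr !alt add0r addr0 => ->.
Qed.

Lemma lie_br_leibniz x y z : br (br x y) z = br (br x z) y + br x (br y z).
Proof.
move: HL; rewrite /lie_bracket => -[_ _ _ jacobi].
have := jacobi x y z; rewrite (lie_brC (br x y)) (lie_brC (br x z) y) (lie_brC z x).
by rewrite lie_brNr => /eqP; rewrite addrC addr_eq0 => /eqP ->; rewrite opprK addrC.
Qed.

Lemma lie_br_suml I (r : seq I) (P : pred I) (f : I -> L) z :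
  br (\sum_(i <- r | P i) f i) z = \sum_(i <- r | P i) br (f i) z.
Proof. exact: (big_morph (br^~ z) (fun x y => lie_brDl x y z) (lie_br0l z)). Qed.

Lemma lie_br_sumr I (r : seq I) (P : pred I) (f : I -> L) z :
  br z (\sum_(i <- r | P i) f i) = \sum_(i <- r | P i) br z (f i).
Proof. exact: (big_morph (br z) (lie_brDr z) (lie_br0r z)). Qed.

End LieBracket.

Section FsetIdentities.
Variable K : choiceType.
Implicit Types A B R : {fset K}.

Lemma fsetUDK A B : (A `<=` B)%fset -> (A `|` (B `\` A))%fset = B.
Proof. by move=> /fsetUidPr AB; rewrite fsetUDl fsetDv fsetD0 AB. Qed.

Lemma fsetUKD A B : [disjoint A & B]%fset -> ((A `|` B) `\` A)%fset = B.
Proof. by rewrite fdisjoint_sym => /fsetDidPl AB; rewrite fsetDUl fsetDv fset0U AB. Qed.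

Lemma fdisjointD A B : [disjoint A & B `\` A]%fset.
Proof. by apply/fdisjointP => x xA; rewrite inE xA. Qed.

Lemma fsetD_UD A B R : (A `<=` R)%fset -> (B `<=` R)%fset -> [disjoint A & B]%fset ->
  (R `\` (A `|` (R `\` (A `|` B))))%fset = B.
Proof.
move=> /fsubsetP AR /fsubsetP BR /fdisjointP AB; apply/fsetP => x.
move: (AR x) (BR x) (AB x) => /implyP + /implyP + /implyP; rewrite !inE.
by case: (x \in A); case: (x \in B); case: (x \in R).
Qed.

End FsetIdentities.

Section BigSeqBij.
Variables (R : Type) (idx : R) (op : Monoid.com_law idx).

Lemma big_seq_bij (I J : eqType) (s : seq I) (t : seq J) (P : pred I) (Q : pred J)
    (h : I -> J) (f : I -> R) (g : J -> R) :
  uniq s -> uniq t ->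
  (forall x, x \in s -> P x -> f x = g (h x)) ->
  (forall x1 x2, x1 \in s -> P x1 -> x2 \in s -> P x2 -> h x1 = h x2 -> x1 = x2) ->
  (forall x, x \in s -> P x -> (h x \in t) && Q (h x)) ->
  (forall y, y \in t -> Q y -> exists2 x, (x \in s) && P x & y = h x) ->
  \big[op/idx]_(x <- s | P x) f x = \big[op/idx]_(y <- t | Q y) g y.
Proof.
move=> us ut fg h_inj h_into h_onto.
rewrite big_seq_cond (eq_bigr (g \o h)); last by move=> x /andP[xs Px]; apply: fg.
rewrite -big_seq_cond -big_filter -[RHS]big_filter -(big_map h predT g).
apply: perm_big; apply: uniq_perm; first 2 last.
- move=> y; rewrite mem_filter; apply/mapP/andP => [[x]|[Qy yt]].
    by rewrite mem_filter => /andP[Px xs] ->; have /andP[-> ->] := h_into x xs Px.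
  by have [x /andP[xs Px] ->] := h_onto y yt Qy; exists x; rewrite ?mem_filter ?Px.
- rewrite map_inj_in_uniq ?filter_uniq // => x1 x2.
  by rewrite !mem_filter => /andP[? ?] /andP[? ?]; apply: h_inj.
- exact: filter_uniq.
Qed.

Lemma big_allpairs_dep_cond (I J : Type) (s : seq I) (t : I -> seq J)
    (P : pred I) (Q : I -> pred J) (f : I -> J -> R) :
  \big[op/idx]_(x <- s | P x) \big[op/idx]_(y <- t x | Q x y) f x y =
  \big[op/idx]_(p <- [seq (x, y) | x <- s, y <- t x] | P p.1 && Q p.1 p.2) f p.1 p.2.
Proof.
rewrite [RHS]big_mkcond big_allpairs_dep /= big_mkcond; apply: eq_bigr => x _.
by case: (P x); rewrite /= ?big_mkcond // big1_eq.
Qed.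

End BigSeqBij.

Arguments big_seq_bij {R idx op I J s t P Q} h {f g}.

Lemma allpairs_pair_uniq (I J : eqType) (s : seq I) (t : I -> seq J) :
  uniq s -> (forall x, uniq (t x)) -> uniq [seq (x, y) | x <- s, y <- t x].
Proof.
elim: s => //= x s IH /andP[xs us] ut; rewrite cat_uniq IH // andbT.
rewrite map_inj_uniq ?ut //=; last by move=> ? ? [].
apply/hasPn => p /allpairsPdep [x' [y' [x's _ ->]]].
by apply/mapP => -[y _ [ex _]]; move: xs; rewrite -ex x's.
Qed.

Lemma mem_allpairs_pair (I J : eqType) (s : seq I) (t : I -> seq J) x y :
  ((x, y) \in [seq (x, y) | x <- s, y <- t x]) = (x \in s) && (y \in t x).
Proof.
apply/allpairsPdep/andP => [[x' [y' [? ? [-> ->]]]] | [? ?]]; first by split.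
by exists x, y.
Qed.

Section PartSum.
Variables (F : fieldType) (L : lmodType F).
Implicit Types (rho : {fset nat}) (f : {fset nat} -> {fset nat} -> L).

Lemma eq_part_sum rho f g : (forall pi sigma, f pi sigma = g pi sigma) ->
  part_sum rho f = part_sum rho g.
Proof. by move=> fg; apply: eq_bigr => pi _; apply: fg. Qed.

Lemma part_sumC rho f : part_sum rho (fun pi sigma => f sigma pi) = part_sum rho f.
Proof.
apply: (big_seq_bij (fun pi => rho `\` pi)%fset) (fset_uniq _) (fset_uniq _) _ _ _ _.
- by move=> pi; rewrite fpowersetE => pi_rho _; rewrite fsetDK.
- move=> pi1 pi2; rewrite !fpowersetE => pi1_rho _ pi2_rho _ e.
  by rewrite -(fsetDK pi1_rho) e fsetDK.
- move=> pi; rewrite fpowersetE => pi_rho /andP[pi0 pi'0].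
  by rewrite fpowersetE fsubsetDl fsetDK // pi0 pi'0.
- move=> sigma; rewrite fpowersetE => sigma_rho /andP[sigma0 sigma'0].
  exists (rho `\` sigma)%fset; last by rewrite fsetDK.
  by rewrite fpowersetE fsubsetDl fsetDK // sigma0 sigma'0.
Qed.

(* Ordered decompositions rho = A + B + C into three nonempty blocks, encoded by (A, B). *)
Definition part3_cond rho (p : {fset nat} * {fset nat}) :=
  [&& p.1 != fset0, p.2 != fset0, [disjoint p.1 & p.2]%fset &
      (rho `\` (p.1 `|` p.2))%fset != fset0].

Definition part3_sum rho (g : {fset nat} -> {fset nat} -> {fset nat} -> L) : L :=
  \sum_(p <- [seq (A, B) | A <- fpowerset rho, B <- fpowerset rho] | part3_cond rho p)
     g p.1 p.2 (rho `\` (p.1 `|` p.2))%fset.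

Lemma part3_seq_uniq rho :
  uniq [seq (A, B) | A <- fpowerset rho, B <- fpowerset rho].
Proof. by apply: allpairs_pair_uniq => *; apply: fset_uniq. Qed.

Lemma part_sum_nestl rho g :
  part_sum rho (fun pi sigma => part_sum pi (fun A B => g A B sigma)) = part3_sum rho g.
Proof.
rewrite /part_sum big_allpairs_dep_cond.
apply: (big_seq_bij (fun p => (p.2, p.1 `\` p.2)%fset)).
- by apply: allpairs_pair_uniq => *; apply: fset_uniq.
- exact: part3_seq_uniq.
- by move=> [pi A]; rewrite mem_allpairs_pair !fpowersetE /= => /andP[_ A_pi] _; rewrite fsetUDK.
- move=> [pi1 A1] [pi2 A2]; rewrite !mem_allpairs_pair !fpowersetE /=.
  move=> /andP[_ A1_pi1] _ /andP[_ A2_pi2] _ [eA eD].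
  by rewrite -(fsetUDK A1_pi1) -(fsetUDK A2_pi2) eD eA.
- move=> [pi A]; rewrite mem_allpairs_pair !fpowersetE /=.
  move=> /andP[pi_rho A_pi] /andP[/andP[pi0 rho'0] /andP[A0 pi'0]].
  rewrite mem_allpairs_pair !fpowersetE /part3_cond /= fsetUDK // A0 pi'0 rho'0.
  by rewrite fdisjointD (fsubset_trans A_pi pi_rho) (fsubset_trans (fsubsetDl _ _) pi_rho).
- move=> [A B]; rewrite mem_allpairs_pair !fpowersetE /part3_cond /=.
  move=> /andP[A_rho B_rho] /and4P[A0 B0 AB rho'0].
  exists (A `|` B, A)%fset; last by rewrite /= fsetUKD.
  rewrite mem_allpairs_pair !fpowersetE /= fsubUset A_rho B_rho fsubsetUl fsetUKD //.
  by rewrite A0 B0 rho'0 (fsubset_neq0 (fsubsetUl A B)).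
Qed.

Lemma part_sum_nestr rho g :
  part_sum rho (fun pi sigma => part_sum sigma (fun B C => g pi B C)) = part3_sum rho g.
Proof.
rewrite /part_sum big_allpairs_dep_cond.
apply: (big_seq_bij id).
- by apply: allpairs_pair_uniq => *; apply: fset_uniq.
- exact: part3_seq_uniq.
- by move=> [pi B] _ _ /=; rewrite fsetDDl.
- by [].
- move=> [A B]; rewrite mem_allpairs_pair !fpowersetE /=.
  move=> /andP[A_rho /fsubsetDP[B_rho BA]] /andP[/andP[A0 rho'0] /andP[B0 rho''0]].
  rewrite mem_allpairs_pair !fpowersetE /part3_cond /= -fsetDDl fdisjoint_sym.
  by rewrite A_rho B_rho A0 B0 BA rho''0.
- move=> [A B]; rewrite mem_allpairs_pair !fpowersetE /part3_cond /=.
  move=> /andP[A_rho B_rho] /and4P[A0 B0 AB rho'0].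
  exists (A, B) => //.
  rewrite mem_allpairs_pair !fpowersetE /= fsetDDl fsubsetD fdisjoint_sym.
  rewrite A_rho B_rho AB A0 B0 rho'0 !andbT.
  by apply: fsubset_neq0 rho'0; rewrite -fsetDDl fsubsetDl.
Qed.

Lemma part3_sum_swap rho g : part3_sum rho (fun A B C => g A C B) = part3_sum rho g.
Proof.
have swap p : p \in [seq (A, B) | A <- fpowerset rho, B <- fpowerset rho] ->
    part3_cond rho p ->
    ((p.1, rho `\` (p.1 `|` p.2))%fset \in
       [seq (A, B) | A <- fpowerset rho, B <- fpowerset rho])
    && part3_cond rho (p.1, rho `\` (p.1 `|` p.2))%fset
    /\ (rho `\` (p.1 `|` (rho `\` (p.1 `|` p.2))))%fset = p.2.
  case: p => A B; rewrite mem_allpairs_pair !fpowersetE /part3_cond /=.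
  move=> /andP[A_rho B_rho] /and4P[A0 B0 AB rho'0].
  rewrite mem_allpairs_pair !fpowersetE fsetD_UD // A_rho fsubsetDl A0 rho'0 B0.
  by rewrite (fdisjointWr (fsetDS rho (fsubsetUl A B)) (fdisjointD A rho)).
apply: (big_seq_bij (fun p => (p.1, rho `\` (p.1 `|` p.2))%fset)).
- exact: part3_seq_uniq.
- exact: part3_seq_uniq.
- by move=> p p_in p_cond /=; have [_ ->] := swap p p_in p_cond.
- move=> [A1 B1] [A2 B2] p1_in p1_cond p2_in p2_cond /= [eA eC].
  have [_ /= e1] := swap _ p1_in p1_cond; have [_ /= e2] := swap _ p2_in p2_cond.
  by move: e1 e2; rewrite -eC -eA => e1 e2; rewrite -e2 e1.
- by move=> p p_in p_cond; have [] := swap p p_in p_cond.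
- move=> p p_in p_cond; have [/andP[q_in q_cond] e] := swap p p_in p_cond.
  by exists (p.1, rho `\` (p.1 `|` p.2))%fset; rewrite ?q_in ?q_cond //= e -surjective_pairing.
Qed.

End PartSum.

Section TensorBracket.
Variables (F : fieldType) (L : lmodType F) (br : L -> L -> L).
Hypothesis HL : lie_bracket br.
Implicit Types (x y z w : Lt L) (rho : {fset nat}) (f : {fset nat} -> {fset nat} -> L).

Lemma part_sum_brl rho f (u : L) :
  br (part_sum rho f) u = part_sum rho (fun pi sigma => br (f pi sigma) u).
Proof. exact: (lie_br_suml HL). Qed.

Lemma part_sum_brr rho f (u : L) :
  br u (part_sum rho f) = part_sum rho (fun pi sigma => br u (f pi sigma)).
Proof. exact: (lie_br_sumr HL). Qed.

Lemma brt_leibniz x y z rho :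
  brt br (brt br x y) z rho = brt br (brt br x z) y rho + brt br x (brt br y z) rho.
Proof.
rewrite /brt (eq_part_sum _ (fun pi _ => part_sum_brl pi _ _)) part_sum_nestl.
rewrite (eq_part_sum _ (fun pi _ => part_sum_brl pi _ _)) part_sum_nestl.
rewrite (eq_part_sum _ (fun _ sigma => part_sum_brr sigma _ _)) part_sum_nestr.
rewrite -(part3_sum_swap rho (fun A B C => br (br (x A) (z B)) (y C))) -big_split.
by apply: eq_bigr => p _; rewrite (lie_br_leibniz HL).
Qed.

Lemma brt_addl x y z rho :
  brt br (fun pi => x pi + y pi) z rho = brt br x z rho + brt br y z rho.
Proof. by rewrite -big_split; apply: eq_bigr => p _; apply: (lie_brDl HL). Qed.

Lemma brt_suml I (r : seq I) (P : pred I) (f : I -> Lt L) y rho :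
  brt br (fun pi => \sum_(i <- r | P i) f i pi) y rho =
  \sum_(i <- r | P i) brt br (f i) y rho.
Proof.
by rewrite /brt /part_sum; under eq_bigr do rewrite (lie_br_suml HL); rewrite exchange_big.
Qed.

Lemma brt_sumr I (r : seq I) (P : pred I) (f : I -> Lt L) y rho :
  brt br y (fun pi => \sum_(i <- r | P i) f i pi) rho =
  \sum_(i <- r | P i) brt br y (f i) rho.
Proof.
by rewrite /brt /part_sum; under eq_bigr do rewrite (lie_br_sumr HL); rewrite exchange_big.
Qed.

Lemma brt0l y rho : brt br (fun _ => 0) y rho = 0.
Proof. by apply: big1 => p _; apply: (lie_br0l HL). Qed.

Lemma brt0r y rho : brt br y (fun _ => 0) rho = 0.
Proof. by apply: big1 => p _; apply: (lie_br0r HL). Qed.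

Lemma brt_leibniz2 x y z w rho :
  brt br (brt br (brt br x y) z) w rho =
  brt br (brt br (brt br x z) w) y rho
  + (brt br (brt br x w) (brt br y z) rho + brt br (brt br x z) (brt br y w) rho)
  + brt br x (brt br (brt br y z) w) rho.
Proof.
have -> : brt br (brt br x y) z =
    fun pi => brt br (brt br x z) y pi + brt br x (brt br y z) pi.
  by apply: functional_extensionality => pi; apply: brt_leibniz.
rewrite brt_addl brt_leibniz (brt_leibniz x (brt br y z)).
by rewrite [in RHS](addrC (brt br (brt br x w) _ rho)) !addrA.
Qed.

Lemma actD_adD x y : actD (adD br y) x = brt br x y.
Proof.
apply: functional_extensionality => rho.
exact: (part_sumC rho (fun pi sigma => br (x pi) (y sigma))).
Qed.

Lemma in_Lt_brt x y : in_Lt x -> in_Lt y -> in_Lt (brt br x y).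
Proof.
move=> [x0 [Sx Sx_supp]] [y0 [Sy Sy_supp]]; split.
  rewrite /brt /part_sum big_seq_cond big1 // => p /andP[].
  by rewrite fpowersetE fsubset0 => /eqP -> /andP[/eqP].
exists [fset (A `|` B)%fset | A in Sx, B in Sy]%fset => rho rho_notin.
rewrite /brt /part_sum big_seq_cond big1 // => pi /andP[].
rewrite fpowersetE => pi_rho _.
have [pi_Sx|] := boolP (pi \in Sx); last by move/Sx_supp ->; rewrite (lie_br0l HL).
have [rho'_Sy|] := boolP ((rho `\` pi)%fset \in Sy); last first.
  by move/Sy_supp ->; rewrite (lie_br0r HL).
move: rho_notin; rewrite -(fsetUDK pi_rho) => /negP[].
by apply/imfset2P; exists pi => //; exists (rho `\` pi)%fset.
Qed.

End TensorBracket.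

Section NilpotentAd.
Variables (F : fieldType) (L : lmodType F) (br : L -> L -> L).
Hypothesis HL : lie_bracket br.
Variables (i : nat) (y : Lt L).
Hypothesis y_Dti : in_Dti i (adD br y).

Lemma brt_Dti_eq0 x rho : i \notin rho -> brt br x y rho = 0.
Proof.
by move=> i_rho; apply: big1 => pi _; apply: y_Dti; rewrite inE (negbTE i_rho) andbF.
Qed.

Lemma brt_Dti_notin x rho pi : i \in (rho `\` pi)%fset -> brt br x y pi = 0.
Proof. by rewrite inE => /andP[i_pi _]; apply: brt_Dti_eq0. Qed.

Lemma brt_Dti_sq x rho : brt br (brt br x y) y rho = 0.
Proof.
apply: big1 => pi _; have [i_rho'|i_rho'] := boolP (i \in (rho `\` pi)%fset).
  by rewrite (brt_Dti_notin x i_rho') (lie_br0l HL).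
exact: (y_Dti i_rho' (brt br x y pi)).
Qed.

Lemma brt_Dti_cross x z rho : brt br (brt br x y) (brt br z y) rho = 0.
Proof.
apply: big1 => pi _; have [i_rho'|i_rho'] := boolP (i \in (rho `\` pi)%fset).
  by rewrite (brt_Dti_notin x i_rho') (lie_br0l HL).
by rewrite (brt_Dti_eq0 z i_rho') (lie_br0r HL).
Qed.

End NilpotentAd.

Lemma sum_ord2_offdiag n (V : nmodType) (M : 'I_n -> 'I_n -> V) :
  (forall k, M k k = 0) ->
  \sum_(k < n) \sum_(l < n) M k l =
  \sum_(k < n) \sum_(l < n | (k < l)%N) M k l + \sum_(k < n) \sum_(l < n | (k < l)%N) M l k.
Proof.
move=> M_diag.
have split_row k : \sum_(l < n) M k l =
    \sum_(l < n | (k < l)%N) M k l + \sum_(l < n | (l < k)%N) M k l.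
  rewrite (bigID (fun l : 'I_n => (k < l)%N)) /=; congr (_ + _).
  rewrite (bigD1 k) /= ?ltnn // M_diag add0r; apply: eq_bigl => l.
  case: (ltngtP l k) => [h|h|/val_inj ->]; rewrite ?eqxx ?andbF //.
  by rewrite -val_eqE /= ?(ltn_eqF h) ?(gtn_eqF h).
rewrite (eq_bigr _ (fun k _ => split_row k)) big_split /=.
by rewrite [X in _ + X](exchange_big_dep xpredT).
Qed.

Section SumOfCommutingSquareZeroAds.
Variables (F : fieldType) (L : lmodType F) (br : L -> L -> L).
Hypothesis HL : lie_bracket br.
Variables (n : nat) (b : 'I_n -> Lt L).
Hypothesis b_Dti : forall k, exists i, in_Dti i (adD br (b k)).
Hypothesis b_commute : forall k l x, in_Lt x ->
  brt br (brt br x (b l)) (b k) = brt br (brt br x (b k)) (b l).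
Hypothesis U2_eq0 : forall x, in_Lt x ->
  (fun rho => \sum_(k < n) \sum_(l < n | (k < l)%N) brt br (brt br x (b l)) (b k) rho)
  = (fun _ => 0).

Let a : Lt L := fun pi => \sum_(k < n) b k pi.

Lemma brt_sum_ad y : brt br y a = fun rho => \sum_(k < n) brt br y (b k) rho.
Proof. by apply: functional_extensionality => rho; apply: (brt_sumr HL). Qed.

Lemma U2_eq0_at x rho : in_Lt x ->
  \sum_(k < n) \sum_(l < n | (k < l)%N) brt br (brt br x (b l)) (b k) rho = 0.
Proof. by move=> x_Lt; apply: (congr1 (@^~ rho) (U2_eq0 x_Lt)). Qed.

Lemma ad_sum_sq x : in_Lt x -> brt br (brt br x a) a = fun _ => 0.
Proof.
move=> x_Lt; apply: functional_extensionality => rho.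
rewrite !brt_sum_ad; under eq_bigr do rewrite (brt_suml HL).
rewrite sum_ord2_offdiag; last by move=> k; have [i bi] := b_Dti k; apply: (brt_Dti_sq HL bi).
under [X in _ + X]eq_bigr do under eq_bigr do rewrite -b_commute //.
by rewrite U2_eq0_at // addr0.
Qed.

Lemma ad_sum_ad_ad c x : in_Lt c -> in_Lt x ->
  brt br (brt br (brt br x a) c) a = fun _ => 0.
Proof.
move=> c_Lt x_Lt; apply: functional_extensionality => rho.
rewrite (brt_leibniz HL) ad_sum_sq // (brt0l HL) add0r !brt_sum_ad (brt_suml HL).
under eq_bigr do rewrite (brt_sumr HL).
rewrite sum_ord2_offdiag; last by move=> k; have [i bi] := b_Dti k; apply: (brt_Dti_cross HL bi).
have U2x_c : \sum_(k < n) \sum_(l < n | (k < l)%N)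
    brt br (brt br (brt br x (b l)) (b k)) c rho = 0.
  rewrite -[in RHS](brt0l HL c rho) -(U2_eq0 x_Lt) (brt_suml HL).
  by apply: eq_bigr => k _; rewrite (brt_suml HL).
have x_U2c : \sum_(k < n) \sum_(l < n | (k < l)%N)
    brt br x (brt br (brt br c (b l)) (b k)) rho = 0.
  rewrite -[in RHS](brt0r HL x rho) -(U2_eq0 c_Lt) (brt_sumr HL).
  by apply: eq_bigr => k _; rewrite (brt_sumr HL).
have := U2_eq0_at rho (in_Lt_brt HL x_Lt c_Lt).
under eq_bigr do under eq_bigr do rewrite (brt_leibniz2 HL).
under eq_bigr do rewrite !big_split.
by rewrite !big_split /= U2x_c x_U2c add0r addr0.
Qed.

Lemma sandwich_sum : sandwich br a.
Proof.
split=> [x x_Lt | c c_Lt x x_Lt]; first exact: ad_sum_sq.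
exact: ad_sum_ad_ad.
Qed.

End SumOfCommutingSquareZeroAds.

Theorem lemma12 (F : fieldType) (L : lmodType F) (br : L -> L -> L)
  (HL : lie_bracket br) (Om : seq (Lt L)) :
  (forall k, (k < size Om)%N -> in_Lt (nth (fun _ => 0) Om k)) ->
  U1 [seq adD br b | b <- Om] ->
  U2 [seq adD br b | b <- Om] ->
  (forall x : Lt L, in_Lt x -> U2op [seq adD br b | b <- Om] x = (fun _ => 0)) ->
  sandwich br (sumLt Om).
Proof.
move=> _ HU1 HU2 HU2op.
pose b (k : 'I_(size Om)) := nth (fun _ => 0) Om k.
have adE (k : 'I_(size Om)) :
    nth (fun _ _ => 0) [seq adD br b | b <- Om] k = adD br (b k).
  by rewrite (nth_map (fun _ => 0)).
have -> : sumLt Om = fun pi => \sum_(k < size Om) b k pi.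
  by apply: functional_extensionality => pi; rewrite /sumLt (big_nth (fun _ => 0)) big_mkord.
apply: (sandwich_sum HL (b := b)) => [k | k l x x_Lt | x x_Lt].
- by have := HU1 k; rewrite size_map adE => /(_ (ltn_ord k)).
- have := HU2 k l; rewrite size_map => /(_ (ltn_ord k) (ltn_ord l) x x_Lt).
  by rewrite !adE !actD_adD.
- rewrite -(HU2op x x_Lt); apply: functional_extensionality => rho.
  rewrite /U2op size_map; apply: eq_bigr => k _; apply: eq_bigr => l _.
  by rewrite !adE !actD_adD.
Qed.
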